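(* Let $\Lambda$ be a finite set of sites and $N\ge1$. For each unordered pair $\langle xy\rangle$ of distinct sites let $\mathcal{V}_{xy}:[-1,1]\to\mathbb{R}$ be a function, and let $H(\{\sigma\})=-\sum_{\langle xy\rangle}\mathcal{V}_{xy}(\sigma_x\cdot\sigma_y)$ for $\sigma=(\sigma_x)_{x\in\Lambda}$, $\sigma_x\in S^{N-1}\subset\mathbb{R}^N$. Let $\mu$ be a nonnegative measure on $(S^{N-1})^\Lambda$ that is invariant under all transformations $\sigma_x\mapsto\eta_x\sigma_x$ with $\eta_x=\pm1$, and let $\langle\cdot\rangle_{H,\mu}$ denote expectation with respect to the probability measure $Z^{-1}e^{-H(\{\sigma\})}d\mu(\{\sigma\})$ (assumed normalizable). Set $\mathcal{V}^-_{xy}(s)=\tfrac12(\mathcal{V}_{xy}(s)-\mathcal{V}_{xy}(-s))$ and $J_{xy}=\sup_{s\in[-1,1]}|\mathcal{V}^-_{xy}(s)|$. Then for any sites $x_1,y_1,\dots,x_n,y_n\in\Lambda$, $$\big|\langle(\sigma_{x_1}\cdot\sigma_{y_1})\cdots(\sigma_{x_n}\cdot\sigma_{y_n})\rangle_{H,\mu}\big|\le \langle\varepsilon_{x_1}\varepsilon_{y_1}\cdots\varepsilon_{x_n}\varepsilon_{y_n}\rangle_{\mathrm{Ising},J}\,\langle|\sigma_{x_1}\cdot\sigma_{y_1}|\cdots|\sigma_{x_n}\cdot\sigma_{y_n}|\rangle_{H,\mu}$$ $$\le \langle\varepsilon_{x_1}\varepsilon_{y_1}\cdots\varepsilon_{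x_n}\varepsilon_{y_n}\rangle_{\mathrm{Ising},J}\,\langle(\sigma_{x_1}\cdot\sigma_{y_1})^2\cdots(\sigma_{x_n}\cdot\sigma_{y_n})^2\rangle_{H,\mu}^{1/2}\le\langle\varepsilon_{x_1}\varepsilon_{y_1}\cdots\varepsilon_{x_n}\varepsilon_{y_n}\rangle_{\mathrm{Ising},J}.$$
   Context: $\langle\cdot\rangle_{\mathrm{Ising},J}$ denotes expectation in the Ising model on $\Lambda$ with spins $\varepsilon_x\in\{\pm1\}$ and pair couplings $J_{xy}$: $\langle F\rangle_{\mathrm{Ising},J}=\sum_{\varepsilon}F(\varepsilon)e^{\sum_{\langle xy\rangle}J_{xy}\varepsilon_x\varepsilon_y}\big/\sum_{\varepsilon}e^{\sum_{\langle xy\rangle}J_{xy}\varepsilon_x\varepsilon_y}$, the sums running over $\varepsilon\in\{\pm1\}^\Lambda$. *)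

From HB Require Import structures.
From mathcomp Require Import all_boot all_order all_algebra.
From mathcomp Require Import all_classical all_reals all_analysis.
Set Implicit Arguments. Unset Strict Implicit. Unset Printing Implicit Defensive.
Import Order.TTheory GRing.Theory Num.Theory.
Local Open Scope classical_set_scope.
Local Open Scope ring_scope.

Section Defs.
Variable R : realType.

(* Sites are Lambda = 'I_L; a spin is a vector of R^N, represented as an
   N.-tuple R; a configuration is an L.-tuple of spins (product sigma-algebra). *)
Definition spin (N : nat) := N.-tuple R.
Definition config (L N : nat) := L.-tuple (spin N).

Definition dotv (N : nat) (a b : spin N) : R := \sum_(i < N) tnth a i * tnth b i.

Definition site (L N : nat) (c : config L N) (x : 'I_L) : spin N := tnth c x.

Definition sphere_configs (L N : nat) : set (config L N) :=
  [set c | forall x : 'I_L, dotv (site c x) (site c x) = 1].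

Arguments sphere_configs : clear implicits.

(* the transformation sigma_x |-> eta_x sigma_x, eta_x = -1 iff eta x = true *)
Definition flip (L N : nat) (eta : {ffun 'I_L -> bool}) (c : config L N)
  : config L N :=
  [tuple (if eta x then [tuple - tnth (site c x) j | j < N] else site c x)
  | x < L].

Definition hamiltonian (L N : nat) (V : 'I_L -> 'I_L -> R -> R)
  (c : config L N) : R :=
  - \sum_(x < L) \sum_(y < L | (x < y)%N) V x y (dotv (site c x) (site c y)).

Definition boltz (L N : nat) (V : 'I_L -> 'I_L -> R -> R) (c : config L N) : R :=
  expR (- hamiltonian V c).

Definition partition_fun (L N : nat) (V : 'I_L -> 'I_L -> R -> R)
  (mu : {measure set (config L N) -> \bar R}) : \bar R :=
  (\int[mu]_(c in sphere_configs L N) (boltz V c)%:E)%E.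

Definition gibbs_avg (L N : nat) (V : 'I_L -> 'I_L -> R -> R)
  (mu : {measure set (config L N) -> \bar R}) (F : config L N -> R) : R :=
  fine (\int[mu]_(c in sphere_configs L N) (F c * boltz V c)%:E)%E
  / fine (partition_fun V mu).

Definition odd_part (f : R -> R) (s : R) : R := (f s - f (- s)) / 2.

Definition Jcoupling (L : nat) (V : 'I_L -> 'I_L -> R -> R) (x y : 'I_L) : R :=
  sup [set `|odd_part (V x y) s| | s in `[-1, 1]%classic].

Definition ising_spin (b : bool) : R := if b then -1 else 1.

Definition ising_weight (L : nat) (J : 'I_L -> 'I_L -> R)
  (e : {ffun 'I_L -> bool}) : R :=
  expR (\sum_(x < L) \sum_(y < L | (x < y)%N)
          J x y * ising_spin (e x) * ising_spin (e y)).

Definition ising_avg (L : nat) (J : 'I_L -> 'I_L -> R)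
  (F : {ffun 'I_L -> bool} -> R) : R :=
  (\sum_(e : {ffun 'I_L -> bool}) F e * ising_weight J e)
  / (\sum_(e : {ffun 'I_L -> bool}) ising_weight J e).

End Defs.
Arguments sphere_configs {R} L N.
Arguments ising_spin {R}.

From HB Require Import structures.
From mathcomp Require Import all_boot all_order all_algebra.
From mathcomp Require Import all_classical all_reals all_analysis.
From mathcomp Require Import ring lra measurable_realfun.
Set Implicit Arguments. Unset Strict Implicit. Unset Printing Implicit Defensive.
Import Order.TTheory GRing.Theory Num.Theory.
Local Open Scope classical_set_scope.
Local Open Scope ring_scope.

(* Flipping spins, sigma_x |-> eta_x sigma_x, multiplies e^{-H} by the Ising
   weight of eta with couplings K_xy = V^-_xy(sigma_x . sigma_y), which satisfy
   |K_xy| <= J_xy, times a flip-invariant factor, while the observable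
   prod (sigma_x . sigma_y) picks up the Ising monomial prod eps_x eps_y.
   Since the flips preserve mu and the sphere, averaging over them writes the
   correlation as an integral of Ising sums with couplings K, and Ginibre's
   inequality |<eps_A>_K| <= <eps_A>_J (Griffiths' first inequality for a
   duplicated system) gives the first bound.  The second one is Cauchy-Schwarz
   for the Gibbs measure, the third one is |sigma_x . sigma_y| <= 1. *)

Section WalshMonomials.
Variables (R : realType) (L : nat).
Local Notation spins := {ffun 'I_L -> bool}.
Local Notation eps := (@ising_spin R).
Implicit Types (m s t : spins) (J K : 'I_L -> 'I_L -> R).

Lemma ising_spin_mul_self b : eps b * eps b = 1.
Proof. by case: b; rewrite /ising_spin ?mulrNN mulr1. Qed.

Lemma ising_spin_addb a b : eps (a (+) b) = eps a * eps b.
Proof. by case: a; case: b; rewrite /ising_spin /= ?mulrNN ?mulr1 ?mul1r. Qed.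

Lemma normr_ising_spin b : `|eps b| = 1.
Proof. by case: b; rewrite /ising_spin ?normrN normr1. Qed.

Definition addbs s t : spins := [ffun x => s x (+) t x].

Lemma addbs_inj s : injective (addbs s).
Proof.
move=> t1 t2 /ffunP st; apply/ffunP => x.
by have := st x; rewrite !ffunE => /addbI.
Qed.

Definition walsh m s : R := \prod_x (if m x then eps (s x) else 1).

Lemma walsh0 s : walsh [ffun => false] s = 1.
Proof. by rewrite /walsh big1 // => x _; rewrite ffunE. Qed.

Lemma walsh_site x s : walsh [ffun z => z == x] s = eps (s x).
Proof.
rewrite /walsh (bigD1 x) //= ffunE eqxx big1 ?mulr1 // => z /negbTE zx.
by rewrite ffunE zx.
Qed.

Lemma walsh_addbl m m' s : walsh (addbs m m') s = walsh m s * walsh m' s.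
Proof.
rewrite /walsh -big_split; apply: eq_bigr => x _; rewrite ffunE.
by case: (m x); case: (m' x); rewrite /= ?mulr1 ?mul1r ?ising_spin_mul_self.
Qed.

Lemma walsh_addbr m s t : walsh m (addbs s t) = walsh m s * walsh m t.
Proof.
rewrite /walsh -big_split /=; apply: eq_bigr => x _; rewrite ffunE.
by case: (m x); rewrite ?ising_spin_addb ?mulr1.
Qed.

Lemma normr_walsh m s : `|walsh m s| = 1.
Proof.
rewrite /walsh normr_prod big1 // => x _.
by case: (m x); rewrite ?normr_ising_spin ?normr1.
Qed.

Lemma sum_walsh_ge0 m : 0 <= \sum_s walsh m s.
Proof.
rewrite /walsh -(bigA_distr_bigA (fun x b => if m x then eps b else 1)) /=.
apply: prodr_ge0 => x _; rewrite big_bool /=.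
by case: (m x); rewrite /ising_spin ?addNr // addr_ge0.
Qed.

Lemma prod_pairs_walsh n (xs ys : 'I_n -> 'I_L) :
  exists m, forall s, \prod_(i < n) (eps (s (xs i)) * eps (s (ys i))) = walsh m s.
Proof.
elim: n xs ys => [|n IHn] xs ys.
  by exists [ffun => false] => s; rewrite big_ord0 walsh0.
have [m walshE] := IHn (fun i => xs (lift ord0 i)) (fun i => ys (lift ord0 i)).
exists (addbs (addbs [ffun z => z == xs ord0] [ffun z => z == ys ord0]) m) => s.
by rewrite big_ord_recl walshE !walsh_addbl !walsh_site.
Qed.

(* Nonnegativity of all Walsh-Fourier coefficients.  Its multipliers are closed
   under sums and products and contain e^{c eps_x eps_y} for c >= 0, which
   yields Griffiths' first inequality. *)
Definition walsh_nonneg (f : spins -> R) := forall m, 0 <= \sum_s walsh m s * f s.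

Definition preserves_walsh_nonneg (g : spins -> R) :=
  forall f, walsh_nonneg f -> walsh_nonneg (fun s => g s * f s).

Lemma walsh_nonneg1 : walsh_nonneg (fun _ => 1).
Proof. by move=> m; under eq_bigr do rewrite mulr1; exact: sum_walsh_ge0. Qed.

Lemma preserves_walsh_nonneg_cst a : 0 <= a -> preserves_walsh_nonneg (fun _ => a).
Proof.
move=> a0 f f_ge0 m; under eq_bigr do rewrite mulrCA.
by rewrite -mulr_sumr mulr_ge0.
Qed.

Lemma preserves_walsh_nonneg_spin x : preserves_walsh_nonneg (fun s => eps (s x)).
Proof.
move=> f f_ge0 m.
rewrite (eq_bigr (fun s => walsh (addbs m [ffun z => z == x]) s * f s)).
  exact: f_ge0.
by move=> s _; rewrite walsh_addbl walsh_site mulrA.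
Qed.

Lemma preserves_walsh_nonneg_mul g h :
  preserves_walsh_nonneg g -> preserves_walsh_nonneg h ->
  preserves_walsh_nonneg (fun s => g s * h s).
Proof.
move=> Pg Ph f f_ge0 m; under eq_bigr do rewrite -mulrA.
exact: Pg _ (Ph _ f_ge0) m.
Qed.

Lemma preserves_walsh_nonneg_add g h :
  preserves_walsh_nonneg g -> preserves_walsh_nonneg h ->
  preserves_walsh_nonneg (fun s => g s + h s).
Proof.
move=> Pg Ph f f_ge0 m; under eq_bigr do rewrite mulrDl mulrDr.
by rewrite big_split; exact: addr_ge0 (Pg _ f_ge0 m) (Ph _ f_ge0 m).
Qed.

Lemma preserves_walsh_nonneg_prod (I : Type) (r : seq I) (P : pred I)
    (F : I -> spins -> R) :
  (forall i, P i -> preserves_walsh_nonneg (F i)) ->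
  preserves_walsh_nonneg (fun s => \prod_(i <- r | P i) F i s).
Proof.
move=> PF; elim: r => [|i r IHr] f f_ge0 m.
  by under eq_bigr do rewrite big_nil mul1r; exact: f_ge0.
under eq_bigr do rewrite big_cons.
case Pi: (P i); last exact: IHr f f_ge0 m.
by under eq_bigr do rewrite -mulrA; exact: PF i Pi _ (IHr f f_ge0) m.
Qed.

Lemma preserves_walsh_nonneg_expR (c : R) x y : 0 <= c ->
  preserves_walsh_nonneg (fun s => expR (c * eps (s x) * eps (s y))).
Proof.
move=> c0.
have cosh_ge0 : 0 <= (expR c + expR (- c)) / 2.
  by rewrite divr_ge0 // addr_ge0 // ltW // expR_gt0.
have sinh_ge0 : 0 <= (expR c - expR (- c)) / 2.
  by rewrite divr_ge0 // subr_ge0 ler_expR; lra.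
have -> : (fun s => expR (c * eps (s x) * eps (s y))) = (fun s =>
    (expR c + expR (- c)) / 2 + (expR c - expR (- c)) / 2 * (eps (s x) * eps (s y))).
  apply/funext => s; rewrite -mulrA.
  by case: (s x); case: (s y); rewrite /ising_spin ?mulrNN ?mulr1 ?mul1r ?mulrN1; lra.
apply: preserves_walsh_nonneg_add; first exact: preserves_walsh_nonneg_cst.
apply: preserves_walsh_nonneg_mul; first exact: preserves_walsh_nonneg_cst.
exact: preserves_walsh_nonneg_mul (preserves_walsh_nonneg_spin x)
                                  (preserves_walsh_nonneg_spin y).
Qed.

Lemma preserves_walsh_nonneg_weight J : (forall x y : 'I_L, (x < y)%N -> 0 <= J x y) ->
  preserves_walsh_nonneg (ising_weight J).
Proof.
move=> J0.
have -> : ising_weight J = (fun s => \prod_(x < L) \prod_(y < L | (x < y)%N)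
                                      expR (J x y * eps (s x) * eps (s y))).
  apply/funext => s; rewrite /ising_weight expR_sum.
  by apply: eq_bigr => x _; rewrite expR_sum.
apply: preserves_walsh_nonneg_prod => x _.
apply: preserves_walsh_nonneg_prod => y xy.
exact: preserves_walsh_nonneg_expR (J0 x y xy).
Qed.

Lemma ising_walsh_ge0 m J : (forall x y : 'I_L, (x < y)%N -> 0 <= J x y) ->
  0 <= \sum_s walsh m s * ising_weight J s.
Proof.
move=> J0; have := preserves_walsh_nonneg_weight J0 walsh_nonneg1 m.
by under eq_bigr do rewrite mulr1.
Qed.

Lemma ising_partition_gt0 J : 0 < \sum_s ising_weight J s.
Proof.
rewrite (bigD1 [ffun => false]) //= ltr_pwDl ?expR_gt0 //.
by apply: sumr_ge0 => s _; rewrite ltW // expR_gt0.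
Qed.

Lemma ising_avg_walsh_ge0 m J : (forall x y : 'I_L, (x < y)%N -> 0 <= J x y) ->
  0 <= ising_avg J (walsh m).
Proof. by move=> J0; rewrite divr_ge0 ?ising_walsh_ge0 // ltW // ising_partition_gt0. Qed.

Lemma ising_weight_addb J K s t :
  ising_weight J s * ising_weight K (addbs s t) =
  ising_weight (fun x y => J x y + K x y * eps (t x) * eps (t y)) s.
Proof.
rewrite /ising_weight -expRD -big_split /=; congr expR.
apply: eq_bigr => x _; rewrite -big_split /=; apply: eq_bigr => y _.
by rewrite !ffunE !ising_spin_addb; ring.
Qed.

(* Ginibre's duplicated system: the substitution s' = s + t of the second
   copy turns a product of two Ising sums into a superposition of Ising
   sums with the couplings J + K eps_t eps_t. *)
Lemma ising_duplicate_expansion m J K (e : R) :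
  (\sum_s walsh m s * ising_weight J s) * (\sum_t ising_weight K t)
  + e * ((\sum_s ising_weight J s) * (\sum_t walsh m t * ising_weight K t)) =
  \sum_t (1 + e * walsh m t) *
    \sum_s walsh m s * ising_weight (fun x y => J x y + K x y * eps (t x) * eps (t y)) s.
Proof.
under [RHS]eq_bigr do rewrite mulr_sumr.
rewrite exchange_big /= !mulr_suml mulr_sumr -big_split /=.
apply: eq_bigr => s _.
rewrite !mulr_sumr -big_split /= (reindex_inj (@addbs_inj s)) /=.
apply: eq_bigr => t _.
by rewrite -(ising_weight_addb J K s t) walsh_addbr; ring.
Qed.

Lemma ginibre_ineq m J K : (forall x y : 'I_L, (x < y)%N -> `|K x y| <= J x y) ->
  `|\sum_s walsh m s * ising_weight K s| <= ising_avg J (walsh m) * \sum_s ising_weight K s.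
Proof.
move=> KJ.
have duplicate_ge0 e : `|e| <= 1 ->
    0 <= (\sum_s walsh m s * ising_weight J s) * (\sum_t ising_weight K t)
         + e * ((\sum_s ising_weight J s) * (\sum_t walsh m t * ising_weight K t)).
  move=> e1; rewrite ising_duplicate_expansion; apply: sumr_ge0 => t _.
  apply: mulr_ge0.
    have : `|e * walsh m t| <= 1 by rewrite normrM normr_walsh mulr1.
    by rewrite ler_norml => /andP[]; lra.
  apply: ising_walsh_ge0 => x y xy.
  have := lerNnormlW (lexx `|K x y * eps (t x) * eps (t y)|).
  by rewrite !normrM !normr_ising_spin !mulr1; have := KJ x y xy; lra.
have := duplicate_ge0 1; rewrite normr1 lexx => /(_ isT) h1.
have := duplicate_ge0 (-1); rewrite normrN normr1 lexx => /(_ isT) h2.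
have zJ := ising_partition_gt0 J; have zK := ising_partition_gt0 K.
rewrite /ising_avg mulrAC ler_pdivlMr // -[X in _ * X](gtr0_norm zJ) -normrM.
by rewrite ler_norml; apply/andP; split; nra.
Qed.

End WalshMonomials.
Arguments walsh {R L}.

Lemma dotv_unit_le1 (R : realType) N (a b : spin R N) :
  dotv a a = 1 -> dotv b b = 1 -> `|dotv a b| <= 1.
Proof.
rewrite /dotv => aa bb; apply: le_trans (ler_norm_sum _ _ _) _.
have amgm i : `|tnth a i * tnth b i| <=
              (tnth a i * tnth a i + tnth b i * tnth b i) / 2.
  have sqr_norm (u : R) : `|u| * `|u| = u * u.
    by rewrite -normrM ger0_norm // -expr2 sqr_ge0.
  rewrite normrM -(sqr_norm (tnth a i)) -(sqr_norm (tnth b i)).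
  by have := sqr_ge0 (`|tnth a i| - `|tnth b i|); nra.
apply: le_trans (ler_sum _ (fun i _ => amgm i)) _.
by rewrite -mulr_suml big_split /= aa bb; lra.
Qed.

Section Configurations.
Variables (R : realType) (L N : nat).
Local Notation config := (config R L N).
Local Notation S := (@sphere_configs R L N).
Local Notation eps := (@ising_spin R).
Local Notation sdot c x y := (dotv (site c x) (site c y)).
Implicit Types (c : config) (eta : {ffun 'I_L -> bool}).

Lemma site_flip eta c x : site (flip eta c) x =
  if eta x then [tuple - tnth (site c x) j | j < N] else site c x.
Proof. by rewrite /site /flip tnth_mktuple. Qed.

Lemma dotv_flip eta c x y :
  sdot (flip eta c) x y = eps (eta x) * eps (eta y) * sdot c x y.
Proof.
rewrite !site_flip /dotv /ising_spin.
case: (eta x); case: (eta y).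
- rewrite mulrNN mulr1 mul1r; apply: eq_bigr => i _; by rewrite !tnth_mktuple mulrNN.
- rewrite mulr1 mulN1r -sumrN; apply: eq_bigr => i _; by rewrite !tnth_mktuple mulNr.
- rewrite mul1r mulN1r -sumrN; apply: eq_bigr => i _; by rewrite !tnth_mktuple mulrN.
- by rewrite mulr1 mul1r.
Qed.

Lemma flip_preimage_sphere eta : flip eta @^-1` S = S.
Proof.
apply/seteqP; split => c /= Sc x.
  by have := Sc x; rewrite dotv_flip ising_spin_mul_self mul1r.
by rewrite dotv_flip ising_spin_mul_self mul1r; exact: Sc.
Qed.

Lemma measurable_coord x j : measurable_fun [set: config] (fun c => tnth (site c x) j).
Proof.
apply: (measurableT_comp (f := fun v : spin R N => tnth v j) (g := fun c : config => tnth c x)).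
  exact: measurable_tnth.
exact: measurable_tnth.
Qed.

Lemma measurable_flip eta : measurable_fun [set: config] (flip eta).
Proof.
apply/measurable_fun_tnthP => x.
apply: (@eq_measurable_fun _ _ _ _ _ (fun c : config =>
   if eta x then [tuple - tnth (site c x) j | j < N] else site c x)).
  by move=> c _ /=; rewrite -site_flip.
case: (eta x); last exact: measurable_tnth.
apply/measurable_fun_tnthP => j.
apply: (@eq_measurable_fun _ _ _ _ _ (fun c : config => - tnth (site c x) j)).
  by move=> c _ /=; rewrite tnth_mktuple.
by apply: measurable_funN; exact: measurable_coord.
Qed.

Lemma measurable_dotv x y : measurable_fun [set: config] (fun c => sdot c x y).
Proof.
by apply: measurable_sum => j; apply: measurable_funM; exact: measurable_coord.
Qed.

Lemma measurable_sphere_configs : measurable S.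
Proof.
have -> : S = \bigcap_(x in [set: 'I_L]) ((fun c => sdot c x x) @^-1` [set 1]).
  by apply/seteqP; split => [c Sc x _|c Sc x]; [exact: Sc|exact: (Sc x I)].
apply: fin_bigcap_measurable; first exact: finite_finset.
move=> x _; rewrite -[X in measurable X]setTI.
exact: measurable_dotv.
Qed.

Lemma sphere_dotv_le1 c x y : S c -> `|sdot c x y| <= 1.
Proof. by move=> Sc; apply: dotv_unit_le1. Qed.

Variables (n : nat) (xs ys : 'I_n -> 'I_L).

Lemma measurable_prod_dotv :
  measurable_fun [set: config] (fun c => \prod_(i < n) sdot c (xs i) (ys i)).
Proof. by apply: measurable_prod => i _; exact: measurable_dotv. Qed.

Lemma prod_dotv_le1 c : S c -> `|\prod_(i < n) sdot c (xs i) (ys i)| <= 1.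
Proof.
move=> Sc; rewrite normr_prod; apply: prodr_ile1 => i _.
by rewrite normr_ge0 sphere_dotv_le1.
Qed.

Lemma prod_dotv_flip eta c :
  \prod_(i < n) sdot (flip eta c) (xs i) (ys i) =
  (\prod_(i < n) (eps (eta (xs i)) * eps (eta (ys i)))) *
  \prod_(i < n) sdot c (xs i) (ys i).
Proof. by rewrite -big_split /=; apply: eq_bigr => i _; rewrite dotv_flip. Qed.

End Configurations.
Arguments measurable_sphere_configs {R L N}.
Arguments measurable_flip {R L N}.
Arguments flip_preimage_sphere {R L N}.

Section real_integrals.
Context d (T : measurableType d) (R : realType) (mu : {measure set T -> \bar R}).
Variables (D : set T) (mD : measurable D).

Lemma integrable_EFinZl k (f : T -> R) : mu.-integrable D (EFin \o f) ->
  mu.-integrable D (EFin \o (fun x => k * f x)).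
Proof.
move=> intf; apply: (eq_integrable mD _ _ _ (integrableZl mD k intf)).
by move=> x _ /=; rewrite EFinM.
Qed.

Lemma integrable_EFinD (f g : T -> R) :
  mu.-integrable D (EFin \o f) -> mu.-integrable D (EFin \o g) ->
  mu.-integrable D (EFin \o (fun x => f x + g x)).
Proof.
move=> intf intg; apply: (eq_integrable mD _ _ _ (integrableD mD intf intg)).
by move=> x _ /=; rewrite EFinD.
Qed.

Lemma integrable_EFin_sum (I : Type) (s : seq I) (F : I -> T -> R) :
  (forall i, mu.-integrable D (EFin \o F i)) ->
  mu.-integrable D (EFin \o (fun x => \sum_(i <- s) F i x)).
Proof.
move=> intF; apply: (eq_integrable mD _ _ _ (integrable_sum mD s (P := xpredT)
  (h := fun i x => (F i x)%:E) (fun i _ => intF i))).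
by move=> x _ /=; rewrite sumEFin.
Qed.

Lemma Rintegral_sum (I : Type) (s : seq I) (F : I -> T -> R) :
  (forall i, mu.-integrable D (EFin \o F i)) ->
  \int[mu]_(x in D) (\sum_(i <- s) F i x) = \sum_(i <- s) \int[mu]_(x in D) F i x.
Proof.
move=> intF; elim: s => [|i s IHs].
  by under eq_Rintegral do rewrite big_nil; rewrite Rintegral_cst // mul0r big_nil.
under eq_Rintegral do rewrite big_cons.
rewrite RintegralD //; first by rewrite IHs big_cons.
exact: integrable_EFin_sum.
Qed.

End real_integrals.

Section measure_preserving.
Context d (T : measurableType d) (R : realType) (mu : {measure set T -> \bar R}).
Variables (D : set T) (phi : T -> T).
Hypotheses (mD : measurable D) (mphi : measurable_fun [set: T] phi)
  (phiD : phi @^-1` D = D)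
  (mu_phi : forall A, measurable A -> mu (phi @^-1` A) = mu A).
Variable f : T -> R.
Hypothesis intf : mu.-integrable D (EFin \o f).

Let g := (EFin \o f) \_ D.

Let mg : measurable_fun [set: T] g.
Proof. exact: ((measurable_restrictT _ mD).1 (measurable_int _ intf)). Qed.

Let gE x : D x -> g x = (f x)%:E.
Proof. by move=> Dx; rewrite /g patchE mem_set. Qed.

Let g_phi x : D x -> g (phi x) = (f (phi x))%:E.
Proof. by move=> Dx; apply: gE; rewrite -phiD in Dx. Qed.

Let pushforward_mu A : measurable A -> A `<=` D -> pushforward mu phi A = mu A.
Proof. by move=> mA _; exact: mu_phi. Qed.

Lemma integrable_comp_measure_preserving :
  mu.-integrable D (EFin \o (fun x => f (phi x))).
Proof.
apply/integrableP; split.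
  apply: (@eq_measurable_fun _ _ _ _ _ (g \o phi)).
    by move=> x /set_mem Dx /=; rewrite g_phi.
  exact: (measurableT_comp mg (measurable_funTS mphi)).
have -> : (\int[mu]_(x in D) `|(EFin \o (fun x => f (phi x))) x|)%E =
          (\int[mu]_(x in phi @^-1` D) ((abse \o g) \o phi) x)%E.
  by rewrite phiD; apply: eq_integral => x /set_mem Dx /=; rewrite g_phi.
rewrite -(ge0_integral_pushforward mphi mu mD).
- rewrite (eq_measure_integral mu pushforward_mu).
  rewrite (eq_integral (fun x => `|(EFin \o f) x|)%E); first by case/integrableP: intf.
  by move=> x /set_mem Dx /=; rewrite gE.
- exact: mphi.
- by apply: measurableT_comp => //; exact: measurable_funTS.
- by move=> y _; exact: abse_ge0.
Qed.

Lemma Rintegral_comp_measure_preserving :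
  \int[mu]_(x in D) f (phi x) = \int[mu]_(x in D) f x.
Proof.
rewrite /Rintegral; congr fine.
have int_g_phi : mu.-integrable (phi @^-1` D) (g \o phi).
  rewrite phiD; apply: (eq_integrable mD _ _ _ integrable_comp_measure_preserving).
  by move=> x /set_mem Dx /=; rewrite g_phi.
have -> : (\int[mu]_(x in D) (f (phi x))%:E)%E =
          (\int[mu]_(x in phi @^-1` D) (g \o phi) x)%E.
  by rewrite phiD; apply: eq_integral => x /set_mem Dx /=; rewrite g_phi.
rewrite -(integral_pushforward mphi mg int_g_phi mD).
rewrite (eq_measure_integral mu pushforward_mu).
  by apply: eq_integral => x /set_mem Dx /=; rewrite gE.
exact: mphi.
Qed.

End measure_preserving.

Section Gibbs.
Variables (R : realType) (L N : nat) (V : 'I_L -> 'I_L -> R -> R).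
Variable mu : {measure set (config R L N) -> \bar R}.
Hypothesis V_meas : forall x y, measurable_fun (`[-1, 1]%classic : set R) (V x y).
Hypothesis Z_fin : (0 < partition_fun V mu < +oo)%E.
Local Notation S := (@sphere_configs R L N).
Local Notation b := (@boltz R L N V).
Implicit Types F : config R L N -> R.

Lemma gibbs_avgE F :
  gibbs_avg V mu F = (\int[mu]_(c in S) (F c * b c)) / \int[mu]_(c in S) b c.
Proof. by []. Qed.

Lemma boltz_gt0 c : 0 < b c.
Proof. exact: expR_gt0. Qed.

Lemma measurable_boltz : measurable_fun S b.
Proof.
have mV x y : measurable_fun S (fun c => V x y (dotv (site c x) (site c y))).
  apply: (measurable_comp (F := (`[-1, 1]%classic : set R)) (f := V x y)).
  - exact: measurable_itv.
  - move=> _ [c Sc <-]; have := sphere_dotv_le1 x y Sc.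
    by rewrite /= in_itv /= ler_norml.
  - exact: V_meas.
  - exact: measurable_funTS (measurable_dotv x y).
rewrite /boltz /hamiltonian; under eq_fun do rewrite opprK.
apply: measurableT_comp; first exact: measurable_expR.
apply: measurable_sum => x; under eq_fun do rewrite -big_filter.
by apply: measurable_sum => y; exact: mV.
Qed.

Lemma partition_gt0 : 0 < \int[mu]_(c in S) b c.
Proof. exact: fine_gt0 Z_fin. Qed.

Lemma integrable_boltz : mu.-integrable S (EFin \o b).
Proof.
apply/integrableP; split; first by apply/measurable_EFinP; exact: measurable_boltz.
rewrite (eq_integral (fun c => (b c)%:E)); first by case/andP: Z_fin.
by move=> c _ /=; rewrite gtr0_norm // boltz_gt0.
Qed.

Lemma integrable_mul_boltz F : measurable_fun S F ->
  (forall c, S c -> `|F c| <= 1) -> mu.-integrable S (EFin \o (fun c => F c * b c)).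
Proof.
move=> mF F1.
apply: (le_integrable measurable_sphere_configs _ _ integrable_boltz).
  by apply/measurable_EFinP; apply: measurable_funM => //; exact: measurable_boltz.
move=> c Sc /=; rewrite lee_fin normrM (gtr0_norm (boltz_gt0 c)).
by rewrite ler_piMl ?F1 // ltW // boltz_gt0.
Qed.

Lemma gibbs_avg_ge0 F : (forall c, S c -> 0 <= F c) -> 0 <= gibbs_avg V mu F.
Proof.
move=> F0; apply: divr_ge0; apply: Rintegral_ge0 => c Sc.
  by rewrite mulr_ge0 ?F0 // ltW // boltz_gt0.
exact/ltW/boltz_gt0.
Qed.

Lemma gibbs_avg_le1 F : measurable_fun S F -> (forall c, S c -> `|F c| <= 1) ->
  gibbs_avg V mu F <= 1.
Proof.
move=> mF F1; rewrite gibbs_avgE ler_pdivrMr ?partition_gt0 // mul1r.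
apply: (le_Rintegral measurable_sphere_configs (integrable_mul_boltz mF F1)
                     integrable_boltz) => c Sc.
by rewrite ler_piMl ?(le_trans (ler_norm _) (F1 c Sc)) // ltW // boltz_gt0.
Qed.

(* Cauchy-Schwarz, from 0 <= <(F - <F>)^2>. *)
Lemma gibbs_avg_sqr_le F : measurable_fun S F -> (forall c, S c -> `|F c| <= 1) ->
  gibbs_avg V mu F ^+ 2 <= gibbs_avg V mu (fun c => F c ^+ 2).
Proof.
move=> mF F1; set a := gibbs_avg V mu F.
have mS : measurable S := measurable_sphere_configs.
have Z0 := partition_gt0.
have intF := integrable_mul_boltz mF F1.
have intF2 : mu.-integrable S (EFin \o (fun c => F c ^+ 2 * b c)).
  apply: integrable_mul_boltz; first exact: measurable_funX.
  by move=> c Sc; rewrite normrX exprn_ile1 ?F1.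
have intb := integrable_boltz.
have aZ : \int[mu]_(c in S) (F c * b c) = a * \int[mu]_(c in S) b c.
  by rewrite /a gibbs_avgE divfK // gt_eqF.
have : \int[mu]_(c in S) (2 * a * (F c * b c)) <=
       \int[mu]_(c in S) (F c ^+ 2 * b c + a ^+ 2 * b c).
  apply: le_Rintegral => //.
  - exact: integrable_EFinZl.
  - by apply: integrable_EFinD => //; exact: integrable_EFinZl.
  - by move=> c _; have := sqr_ge0 (F c - a); have := boltz_gt0 c; nra.
rewrite RintegralZl // RintegralD //; last exact: integrable_EFinZl.
rewrite RintegralZl // aZ => h.
by rewrite gibbs_avgE ler_pdivlMr //; nra.
Qed.

Lemma gibbs_avg_le_sqrt F : measurable_fun S F -> (forall c, S c -> 0 <= F c <= 1) ->
  gibbs_avg V mu F <= Num.sqrt (gibbs_avg V mu (fun c => F c ^+ 2)).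
Proof.
move=> mF F01.
have F1 c : S c -> `|F c| <= 1 by move=> /F01 /andP[F0 F1]; rewrite ger0_norm.
have avg_ge0 : 0 <= gibbs_avg V mu F by apply: gibbs_avg_ge0 => c /F01 /andP[].
rewrite -(ger0_norm avg_ge0) -sqrtr_sqr ler_sqrt ?gibbs_avg_sqr_le //.
by apply: gibbs_avg_ge0 => c _; exact: sqr_ge0.
Qed.

End Gibbs.

Section FlipSymmetry.
Variables (R : realType) (L N : nat) (V : 'I_L -> 'I_L -> R -> R).
Variable mu : {measure set (config R L N) -> \bar R}.
Hypothesis V_meas : forall x y, measurable_fun (`[-1, 1]%classic : set R) (V x y).
Hypothesis V_odd_bounded : forall x y, exists M : R,
  forall s, s \in (`[-1, 1] : interval R) -> `|odd_part (V x y) s| <= M.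
Hypothesis mu_flip : forall (eta : {ffun 'I_L -> bool}) (A : set (config R L N)),
  measurable A -> mu (flip eta @^-1` A) = mu A.
Hypothesis Z_fin : (0 < partition_fun V mu < +oo)%E.
Local Notation S := (@sphere_configs R L N).
Local Notation b := (@boltz R L N V).
Local Notation eps := (@ising_spin R).
Local Notation sdot c x y := (dotv (site c x) (site c y)).
Local Notation flips := {ffun 'I_L -> bool}.
Implicit Types (c : config R L N) (F : config R L N -> R).

Definition odd_coupling c x y : R := odd_part (V x y) (sdot c x y).

Definition even_boltz c : R :=
  expR (\sum_(x < L) \sum_(y < L | (x < y)%N)
          (V x y (sdot c x y) + V x y (- sdot c x y)) / 2).

Lemma boltz_flip (eta : flips) c :
  b (flip eta c) = even_boltz c * ising_weight (odd_coupling c) eta.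
Proof.
rewrite /boltz /hamiltonian opprK /even_boltz /ising_weight -expRD -big_split /=.
congr expR; apply: eq_bigr => x _; rewrite -big_split /=; apply: eq_bigr => y _.
rewrite dotv_flip /odd_coupling /odd_part.
by case: (eta x); case: (eta y); rewrite /ising_spin ?mulrNN ?mulr1 ?mul1r ?mulN1r ?mulrN1; lra.
Qed.

Lemma odd_coupling_le_J c x y : S c -> `|odd_coupling c x y| <= Jcoupling V x y.
Proof.
move=> Sc; apply: ub_le_sup.
  by have [M hM] := V_odd_bounded x y; exists M => _ [s hs <-]; exact: hM.
exists (sdot c x y) => //.
by have := sphere_dotv_le1 x y Sc; rewrite /= in_itv /= ler_norml.
Qed.

Lemma Jcoupling_ge0 x y : 0 <= Jcoupling V x y.
Proof.
apply: le_trans (normr_ge0 (odd_part (V x y) 0)) _; apply: ub_le_sup.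
  by have [M hM] := V_odd_bounded x y; exists M => _ [s hs <-]; exact: hM.
by exists 0 => //; rewrite /= in_itv /= lerN10 ler01.
Qed.

Let integrable_flip (eta : flips) f : mu.-integrable S (EFin \o f) ->
  mu.-integrable S (EFin \o (fun c => f (flip eta c))).
Proof.
move=> intf; exact (integrable_comp_measure_preserving measurable_sphere_configs
  (measurable_flip eta) (flip_preimage_sphere eta) (mu_flip eta) intf).
Qed.

Let Rintegral_flip (eta : flips) f : mu.-integrable S (EFin \o f) ->
  \int[mu]_(c in S) f (flip eta c) = \int[mu]_(c in S) f c.
Proof.
move=> intf; exact (Rintegral_comp_measure_preserving measurable_sphere_configs
  (measurable_flip eta) (flip_preimage_sphere eta) (mu_flip eta) intf).
Qed.

Lemma integrable_flip_sum f : mu.-integrable S (EFin \o f) ->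
  mu.-integrable S (EFin \o (fun c => \sum_(eta : flips) f (flip eta c))).
Proof.
move=> intf.
apply: (@integrable_EFin_sum _ _ _ mu _ measurable_sphere_configs _ (index_enum flips)
  (fun eta c => f (flip eta c))) => eta.
exact: integrable_flip.
Qed.

Lemma Rintegral_flip_sum f : mu.-integrable S (EFin \o f) ->
  \int[mu]_(c in S) (\sum_(eta : flips) f (flip eta c)) =
  (\int[mu]_(c in S) f c) *+ #|flips|.
Proof.
move=> intf.
rewrite (@Rintegral_sum _ _ _ mu _ measurable_sphere_configs _ (index_enum flips)
  (fun eta c => f (flip eta c))) => [|eta]; last exact: integrable_flip.
by rewrite -sumr_const; apply: eq_bigr => eta _; exact: Rintegral_flip.
Qed.

Lemma sum_flip_boltz m F c : (forall eta, F (flip eta c) = walsh m eta * F c) ->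
  \sum_(eta : flips) F (flip eta c) * b (flip eta c) =
  F c * even_boltz c * \sum_(eta : flips) walsh m eta * ising_weight (odd_coupling c) eta.
Proof.
move=> F_flip; rewrite mulr_sumr; apply: eq_bigr => eta _.
by rewrite boltz_flip F_flip; ring.
Qed.

Lemma flip_sum_le_ising m F c : S c ->
  (forall eta, F (flip eta c) = walsh m eta * F c) ->
  `|\sum_(eta : flips) F (flip eta c) * b (flip eta c)| <=
  ising_avg (Jcoupling V) (walsh m) *
    \sum_(eta : flips) `|F (flip eta c)| * b (flip eta c).
Proof.
move=> Sc F_flip.
have abs_sum : \sum_(eta : flips) `|F (flip eta c)| * b (flip eta c) =
    `|F c| * even_boltz c * \sum_(eta : flips) ising_weight (odd_coupling c) eta.
  rewrite (@sum_flip_boltz [ffun => false] (fun c' => `|F c'|)) => [|eta].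
    by congr (_ * _); apply: eq_bigr => eta _; rewrite walsh0 mul1r.
  by rewrite F_flip normrM normr_walsh walsh0.
have ginibre := ginibre_ineq m (fun x y _ => odd_coupling_le_J x y Sc).
have E0 : 0 < even_boltz c by exact: expR_gt0.
rewrite abs_sum (sum_flip_boltz F_flip) !normrM (gtr0_norm E0) [leRHS]mulrCA.
by apply: ler_wpM2l ginibre; rewrite mulr_ge0 // ltW.
Qed.

Lemma gibbs_avg_le_ising m F : measurable_fun S F -> (forall c, S c -> `|F c| <= 1) ->
  (forall eta c, F (flip eta c) = walsh m eta * F c) ->
  `|gibbs_avg V mu F| <=
    ising_avg (Jcoupling V) (walsh m) * gibbs_avg V mu (fun c => `|F c|).
Proof.
move=> mF F1 F_flip.
have mS : measurable S := measurable_sphere_configs.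
have Z0 := partition_gt0 Z_fin.
have flips_gt0 : (0 < #|flips|)%N by apply/card_gt0P; exists [ffun => false].
have intF := integrable_mul_boltz V_meas Z_fin mF F1.
have int_absF : mu.-integrable S (EFin \o (fun c => `|F c| * b c)).
  apply: (integrable_mul_boltz V_meas Z_fin (F := fun c => `|F c|)) => [|c Sc].
    by apply: measurableT_comp.
  by rewrite normr_id F1.
rewrite !gibbs_avgE normrM normfV (gtr0_norm Z0) mulrA.
apply: ler_wpM2r; first by rewrite invr_ge0 ltW.
rewrite -(ler_pMn2r flips_gt0) -normrMn -mulrnAr.
rewrite -(Rintegral_flip_sum intF) -(Rintegral_flip_sum int_absF).
apply: le_trans (le_normr_Rintegral mS (integrable_flip_sum intF)) _.
rewrite -RintegralZl //; last exact: integrable_flip_sum int_absF.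
apply: le_Rintegral => //.
- exact: integrable_norm (integrable_flip_sum intF).
- exact: integrable_EFinZl (integrable_flip_sum int_absF).
- by move=> c Sc; apply: flip_sum_le_ising => // eta; exact: F_flip.
Qed.

End FlipSymmetry.

Theorem theoremC5 (R : realType) (L N : nat) (hN : (1 <= N)%N)
  (V : 'I_L -> 'I_L -> R -> R)
  (hVsym : forall x y, V x y = V y x)
  (hVmeas : forall x y, measurable_fun (`[-1, 1]%classic : set R) (V x y))
  (hVbd : forall x y, exists M : R, forall s, s \in (`[-1, 1] : interval R) ->
            `|odd_part (V x y) s| <= M)
  (mu : {measure set (config R L N) -> \bar R})
  (hmu_supp : mu (~` sphere_configs L N) = 0%E)
  (hmu_inv : forall (eta : {ffun 'I_L -> bool}) (A : set (config R L N)),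
      measurable A -> mu (flip eta @^-1` A) = mu A)
  (hZ : (0 < partition_fun V mu < +oo)%E)
  (n : nat) (xs ys : 'I_n -> 'I_L) :
  let J := Jcoupling V in
  let I := ising_avg J (fun e => \prod_(i < n)
                          (ising_spin (e (xs i)) * ising_spin (e (ys i)) : R)) in
  let avg := gibbs_avg V mu in
  `| avg (fun c => \prod_(i < n) dotv (site c (xs i)) (site c (ys i))) |
    <= I * avg (fun c => \prod_(i < n) `|dotv (site c (xs i)) (site c (ys i))|)
  /\ I * avg (fun c => \prod_(i < n) `|dotv (site c (xs i)) (site c (ys i))|)
    <= I * Num.sqrt (avg (fun c =>
                       \prod_(i < n) (dotv (site c (xs i)) (site c (ys i))) ^+ 2))
  /\ I * Num.sqrt (avg (fun c =>
                       \prod_(i < n) (dotv (site c (xs i)) (site c (ys i))) ^+ 2))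
    <= I.
Proof.
move=> J I avg.
have [m walshE] := prod_pairs_walsh R xs ys.
have -> : I = ising_avg J (walsh m) by congr ising_avg; apply/funext => s; rewrite walshE.
have I_ge0 : 0 <= ising_avg J (walsh m).
  by apply: ising_avg_walsh_ge0 => x y _; exact: Jcoupling_ge0.
set F := fun c => \prod_(i < n) dotv (site c (xs i)) (site c (ys i)).
have mF : measurable_fun (sphere_configs L N) F.
  exact: measurable_funTS (measurable_prod_dotv xs ys).
have F_le1 c : sphere_configs L N c -> `|F c| <= 1 by exact: prod_dotv_le1.
have F_flip eta c : F (flip eta c) = walsh m eta * F c.
  by rewrite /F prod_dotv_flip walshE.
have -> : (fun c => \prod_(i < n) `|dotv (site c (xs i)) (site c (ys i))|) =
          (fun c => `|F c|) by apply/funext => c; rewrite normr_prod.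
have -> : (fun c => \prod_(i < n) dotv (site c (xs i)) (site c (ys i)) ^+ 2) =
          (fun c => `|F c| ^+ 2) by apply/funext => c; rewrite real_normK ?num_real // prodrXl.
have m_absF : measurable_fun (sphere_configs L N) (fun c => `|F c|).
  exact: measurableT_comp.
split; first exact (gibbs_avg_le_ising hVmeas hVbd hmu_inv hZ mF F_le1 F_flip).
split; [|rewrite -[leRHS]mulr1]; apply: ler_wpM2l => //.
  by apply: gibbs_avg_le_sqrt => // c Sc; rewrite normr_ge0 F_le1.
rewrite -sqrtr1 ler_sqrt // gibbs_avg_le1 //; first exact: measurable_funX.
by move=> c Sc; rewrite normrX normr_id exprn_ile1 ?F_le1.
Qed.
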